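(* Let $S$ be a poset, $(G_i)_{i\in S}$ a family of impartial games, and $G = S \otimes_i G_i$ their ordered join. Let $T \subseteq S$ be the support of $G$. (1) $G$ is terminating if and only if $T$ is a well partially ordered set and each component $G_i$ ($i\in S$) is terminating. (2) $G$ is short if and only if $T$ is finite and each component $G_i$ ($i \in S$) is short.
   Context: All games are impartial combinatorial games under normal play; a game is determined by its set of options, and $G \to G'$ means $G'$ is an option of $G$. A game is terminating if it admits no infinite sequence of moves, and short if it is terminating and has only finitely many positions (reachable subgames). $\mathbf{0}$ denotes the game with no options. Ordered join: for a poset $S$ and a family $(G_i)_{i\in S}$ of games, $S \otimes_i G_i$ is the game whose options are exactly the ordered joins $S \otimes_i G'_i$ obtained by choosing one $i_0\in S$ and an option $G_{i_0}\to G'_{i_0}$, and setting $G'_i=\mathbf{0}$ for all $i>i_0$ and $G'_i=G_i$ for all other $i\ne i_0$. The support of $S\otimes_i G_i$ is the induced subposet of $S$ consisting of all $i$ with $G_i\neq\mathbf{0}$. A poset is a well partially ordered set (wposet) if every infinite sequence in it contains an infinite ascending subsequence (equivalently, it has no infinite strictly descending chain and no infinite antichain). *)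

(* Impartial games, possibly non-terminating, modelled as
   coinductive trees whose options are indexed by a type; games are
   identified up to bisimilarity (a game is determined by its set of options). *)
From Stdlib Require Import List ClassicalDescription.
Set Implicit Arguments.

CoInductive game : Type := Game { idx : Type; opt : idx -> game }.

Definition zero : game := Game (fun e : Empty_set => match e with end).

CoInductive bisim : game -> game -> Prop :=
  bisim_intro (G H : game) :
    (forall a : idx G, exists b : idx H, bisim (opt G a) (opt H b)) ->
    (forall b : idx H, exists a : idx G, bisim (opt G a) (opt H b)) ->
    bisim G H.

Definition move (G G' : game) : Prop := exists a : idx G, G' = opt G a.

Definition terminating (G : game) : Prop :=
  ~ exists f : nat -> game, f 0 = G /\ forall n, move (f n) (f (S n)).

Inductive reach (G : game) : game -> Prop :=
| reach_refl : reach G G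
| reach_step H H' : reach G H -> move H H' -> reach G H'.

Definition short (G : game) : Prop :=
  terminating G /\
  exists l : list game, forall H, reach G H -> exists H', In H' l /\ bisim H H'.

Definition is_poset (S : Type) (le : S -> S -> Prop) : Prop :=
  (forall x, le x x) /\
  (forall x y, le x y -> le y x -> x = y) /\
  (forall x y z, le x y -> le y z -> le x z).

Definition join_update (S : Type) (le : S -> S -> Prop) (F : S -> game)
  (i0 : S) (g : game) : S -> game :=
  fun i => if excluded_middle_informative (i = i0) then g
           else if excluded_middle_informative (le i0 i) then zero
           else F i.

CoFixpoint ojoin (S : Type) (le : S -> S -> Prop) (F : S -> game) : game :=
  Game (fun p : {i : S & idx (F i)} =>
          ojoin le (join_update le F (projT1 p) (opt (F (projT1 p)) (projT2 p)))).

Definition support (S : Type) (F : S -> game) (i : S) : Prop := ~ bisim (F i) zero.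

Definition wpo_on (S : Type) (le : S -> S -> Prop) (P : S -> Prop) : Prop :=
  forall f : nat -> S, (forall n, P (f n)) ->
    exists g : nat -> nat, (forall m n, m < n -> g m < g n) /\
      (forall m n, m < n -> le (f (g m)) (f (g n))).

Definition finite_on (S : Type) (P : S -> Prop) : Prop :=
  exists l : list S, forall i, P i -> In i l.

(* A play of the join S (x)_i G_i is determined by the sequence of
   components c 0, c 1, ... in which moves are made and the options g 0, g 1, ...
   chosen there; a move in c k erases every component strictly above c k.
   - A "bad" sequence in the support (no term below a later one) can be played
     move after move, since a move never erases a later, incomparable component;
     so termination forces the support to be a wpo.  Components inherit
     termination since any play of G_i is also a play of the join.
   - Conversely, in an infinite play the components moved in lie in the support,
     and a later move is never strictly above an earlier one (that component was
     erased).  A wpo therefore yields infinitely many moves in one component x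
     which is never erased, i.e. an infinite descent from G_x.  A terminating game is short iff its plays have bounded length
   (no position repeats up to bisimilarity; bounded depth leaves only finitely
   many hereditarily finite games).  A play of G_i lifts to the join; an infinite
   support contains, by (1), an infinite chain, whose members played from the top
   down give arbitrarily long plays; and with finite support every position of the
   join is the join of positions of the components, of which there are finitely
   many up to bisimilarity. *)

From Stdlib Require Import List Lia Arith Classical ClassicalEpsilon ClassicalDescription.
Import ListNotations.
Set Implicit Arguments.

Lemma dependent_choice {A : Type} (P : A -> Prop) (R : A -> A -> Prop) (a0 : A) :
  P a0 -> (forall a, P a -> exists b, P b /\ R a b) ->
  exists h : nat -> A, h 0 = a0 /\ forall n, P (h n) /\ R (h n) (h (S n)).
Proof.
  intros H0 Hstep.
  destruct (choice (fun p q : {a | P a} => R (proj1_sig p) (proj1_sig q))) as [next Hnext].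
  { intros [a Ha]. destruct (Hstep a Ha) as [b [Hb Rab]]. now exists (exist P b Hb). }
  exists (fun n => proj1_sig (Nat.iter n next (exist P a0 H0))).
  split; [reflexivity|]. intro n. split; [apply proj2_sig | apply Hnext].
Qed.

Lemma chain_lt {A : Type} (R : A -> A -> Prop) (x : nat -> A) :
  (forall a b c, R a b -> R b c -> R a c) -> (forall n, R (x n) (x (S n))) ->
  forall m n, m < n -> R (x m) (x n).
Proof.
  intros Htrans Hstep m n Hmn. induction Hmn; [apply Hstep|].
  eapply Htrans; [exact IHHmn | apply Hstep].
Qed.

Lemma sequence_repeats {A : Type} (l : list A) (s : nat -> A) :
  (forall n, In (s n) l) -> exists m n, m < n /\ s m = s n.
Proof.
  intro Hs. set (L := map s (seq 0 (S (length l)))).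
  assert (Hdup : ~ NoDup L).
  { intro Hnd. assert (Hincl : incl L l)
      by (intros a Ha; apply in_map_iff in Ha as [k [<- _]]; apply Hs).
    pose proof (NoDup_incl_length Hnd Hincl) as Hlen.
    unfold L in Hlen. rewrite length_map, length_seq in Hlen. lia. }
  rewrite (NoDup_nth L (s 0)) in Hdup.
  apply not_all_ex_not in Hdup as [i Hdup]. apply not_all_ex_not in Hdup as [j Hdup].
  apply imply_to_and in Hdup as [Hi Hdup]. apply imply_to_and in Hdup as [Hj Hdup].
  apply imply_to_and in Hdup as [Heq Hne].
  unfold L in Hi, Hj, Heq. rewrite length_map, length_seq in Hi, Hj.
  rewrite !map_nth, !seq_nth in Heq by assumption. simpl in Heq.
  destruct (Nat.lt_total i j) as [Hlt | [Hij | Hgt]]; [exists i, j | contradiction | exists j, i]; auto.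
Qed.

Section WellPartialOrders.
Variables (T : Type) (le : T -> T -> Prop).
Hypothesis le_refl : forall x, le x x.
Hypothesis le_trans : forall x y z, le x y -> le y z -> le x z.

Definition bad_sequence (s : nat -> T) : Prop := forall m n, m < n -> ~ le (s m) (s n).

(* Either infinitely many terms have no
   larger term after them (and these form a bad sequence), or from some point on
   every term has a larger one after it (and we climb). *)
Lemma wpo_of_no_bad_sequence (P : T -> Prop) :
  (forall s, (forall n, P (s n)) -> ~ bad_sequence s) -> wpo_on le P.
Proof.
  intros Hnobad f Hf.
  destruct (classic (forall N, exists n, N <= n /\ forall m, n < m -> ~ le (f n) (f m)))
    as [Hmaximal | Hclimb].
  - exfalso. destruct (Hmaximal 0) as [n0 [_ Hn0]].
    destruct (dependent_choice (fun n => forall m, n < m -> ~ le (f n) (f m)) lt n0 Hn0)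
      as [h [_ Hh]].
    { intros a _. destruct (Hmaximal (S a)) as [b [Hab Hb]]. exists b. split; [exact Hb | lia]. }
    apply (Hnobad (fun k => f (h k))); [intro; apply Hf|].
    intros m n Hmn. apply (proj1 (Hh m)).
    apply (chain_lt lt h); [intros; lia | intro; apply Hh | exact Hmn].
  - apply not_all_ex_not in Hclimb as [N HN].
    assert (Hnext : forall n, N <= n -> exists m, n < m /\ le (f n) (f m)).
    { intros n Hn. apply NNPP. intro C. apply HN. exists n. split; [exact Hn|].
      intros m Hm Hle. apply C. now exists m. }
    destruct (dependent_choice (fun n => N <= n) (fun a b => a < b /\ le (f a) (f b)) N (le_n N))
      as [h [_ Hh]].
    { intros a Ha. destruct (Hnext a Ha) as [b [Hab Hb]]. exists b. repeat split; auto; lia. }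
    exists h. split.
    + apply (chain_lt lt h); [intros; lia | intro; apply Hh].
    + apply (chain_lt (fun a b => le (f a) (f b)) h); [intros a b c; apply le_trans | intro; apply Hh].
Qed.

(* Finite subsets are wpos: a bad sequence in a finite set would repeat a value. *)
Lemma finite_wpo (P : T -> Prop) : finite_on P -> wpo_on le P.
Proof.
  intros [l Hl]. apply wpo_of_no_bad_sequence. intros s Hs Hbad.
  destruct (sequence_repeats l s (fun n => Hl _ (Hs n))) as [m [n [Hmn Heq]]].
  apply (Hbad m n Hmn). rewrite Heq. apply le_refl.
Qed.

End WellPartialOrders.

Definition option_of (Y X : game) : Prop := move X Y.

Lemma terminating_acc (X : game) : terminating X -> Acc option_of X.
Proof.
  intro Ht. apply NNPP. intro Hna. apply Ht.
  destruct (dependent_choice (fun Y => ~ Acc option_of Y) move X Hna) as [h [h0 hh]].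
  { intros Y HY. apply NNPP. intro C. apply HY. constructor. intros Z HZ.
    apply NNPP. intro CZ. apply C. now exists Z. }
  exists h. split; [exact h0 | intro n; apply hh].
Qed.

Lemma no_stuttering_descent (X : game) : Acc option_of X ->
  forall s : nat -> game, (forall n, s (S n) = s n \/ move (s n) (s (S n))) ->
  (forall N, exists n, N <= n /\ move (s n) (s (S n))) -> forall n, s n <> X.
Proof.
  induction 1 as [X _ IH]. intros s Hstep Hinf.
  assert (Hnext_move : forall d n, s n = X -> move (s (d + n)) (s (S (d + n))) -> False).
  { induction d as [|d IHd]; intros n Hn Hmove.
    - simpl in Hmove. rewrite Hn in Hmove. exact (IH _ Hmove s Hstep Hinf (S n) eq_refl).
    - destruct (Hstep n) as [Hsame | Hm].
      + apply (IHd (S n)); [congruence | now replace (d + S n) with (S d + n) by lia].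
      + rewrite Hn in Hm. exact (IH _ Hm s Hstep Hinf (S n) eq_refl). }
  intros n Hn. destruct (Hinf n) as [m [Hnm Hm]].
  apply (Hnext_move (m - n) n Hn). now replace (m - n + n) with m by lia.
Qed.

Lemma bisim_options (G H : game) : bisim G H ->
  (forall a, exists b, bisim (opt G a) (opt H b)) /\
  (forall b, exists a, bisim (opt G a) (opt H b)).
Proof. intro B. destruct B as [G H Hfwd Hbwd]. now split. Qed.

Lemma bisim_refl : forall G, bisim G G.
Proof. cofix CH. intros [I o]. constructor; intro a; exists a; apply CH. Qed.

Lemma bisim_sym : forall G H, bisim G H -> bisim H G.
Proof.
  cofix CH. intros G H B. destruct (bisim_options B) as [Hfwd Hbwd]. constructor.
  - intro b. destruct (Hbwd b) as [a Ha]. exists a. apply CH, Ha.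
  - intro a. destruct (Hfwd a) as [b Hb]. exists b. apply CH, Hb.
Qed.

Lemma bisim_trans : forall G H K, bisim G H -> bisim H K -> bisim G K.
Proof.
  cofix CH. intros G H K B1 B2.
  destruct (bisim_options B1) as [a1 b1], (bisim_options B2) as [a2 b2]. constructor.
  - intro a. destruct (a1 a) as [b Hb]. destruct (a2 b) as [c Hc].
    exists c. exact (CH _ _ _ Hb Hc).
  - intro c. destruct (b2 c) as [b Hb]. destruct (b1 b) as [a Ha].
    exists a. exact (CH _ _ _ Ha Hb).
Qed.

Lemma bisim_zero_iff (X : game) : bisim X zero <-> (idx X -> False).
Proof.
  split.
  - intros B a. destruct (proj1 (bisim_options B) a) as [[] _].
  - intro H. constructor; intro a; [destruct (H a) | destruct a].
Qed.

Lemma no_move_zero (Y : game) : ~ move zero Y.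
Proof. intros [[] _]. Qed.

Lemma reach_no_options (X Y : game) : (idx X -> False) -> reach X Y -> Y = X.
Proof.
  intros Hend Hr. induction Hr as [|H H' Hr IH [a _]]; [reflexivity|].
  subst. destruct (Hend a).
Qed.

Definition some_option (X : game) : game := epsilon (inhabits zero) (move X).

Lemma some_option_move (X : game) : ~ bisim X zero -> move X (some_option X).
Proof.
  intro Hnz. unfold some_option. apply epsilon_spec. apply NNPP. intro Hnone.
  apply Hnz. apply bisim_zero_iff. intro a. apply Hnone. exists (opt X a). now exists a.
Qed.

Inductive path : nat -> game -> game -> Prop :=
| path_nil X : path 0 X X
| path_cons d X X' Y : move X X' -> path d X' Y -> path (S d) X Y.

Definition bounded_depth (N : nat) (X : game) : Prop := forall d Y, path d X Y -> d <= N.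

Lemma path_snoc d X Y Z : path d X Y -> move Y Z -> path (S d) X Z.
Proof.
  induction 1 as [X|d X X' Y Hm _ IH]; intro HZ.
  - apply path_cons with Z; [exact HZ | constructor].
  - apply path_cons with X'; auto.
Qed.

Lemma path_app d1 d2 X Y Z : path d1 X Y -> path d2 Y Z -> path (d1 + d2) X Z.
Proof. induction 1; intro H2; simpl; [exact H2 | apply path_cons with X'; auto]. Qed.

Lemma reach_path X Y : reach X Y -> exists d, path d X Y.
Proof.
  induction 1 as [|H H' _ [d Hd] Hm]; [exists 0; constructor | exists (S d); eapply path_snoc; eauto].
Qed.

Lemma reach_cons X X' Y : move X X' -> reach X' Y -> reach X Y.
Proof.
  intros Hm Hr. induction Hr; [apply reach_step with X; [constructor | exact Hm] | eapply reach_step; eauto].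
Qed.

Lemma no_bisimilar_return X : Acc option_of X -> forall d Y, path (S d) X Y -> ~ bisim Y X.
Proof.
  induction 1 as [X _ IH]. intros d Y Hp Hb.
  inversion Hp as [|d' X0 X1 Y0 Hm Hp' E1 E2 E3]; subst.
  destruct Hm as [a Ea]. destruct (proj2 (bisim_options Hb) a) as [a0 Hb0].
  apply (IH X1 (ex_intro _ a Ea) d (opt Y a0)).
  - apply path_snoc with Y; [exact Hp' | now exists a0].
  - now rewrite Ea.
Qed.

(* If the positions of a well-founded game X lie, up to bisimilarity, in a list l,
   then plays from X have at most |l| moves: after the first move the class of X
   is never met again, so the rest of the play stays in a shorter list. *)
Lemma depth_bounded_by_positions (n : nat) : forall l X, length l <= n -> Acc option_of X ->
  (forall H, reach X H -> exists e, In e l /\ bisim H e) -> bounded_depth (length l) X.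
Proof.
  induction n; intros l X Hl Hacc Hcover d Y Hp.
  - destruct (Hcover X (reach_refl X)) as [e [He _]].
    destruct l; [contradiction | simpl in Hl; lia].
  - destruct Hp as [|d X X1 Y Hm Hp]; [lia|].
    set (other := fun e => if excluded_middle_informative (bisim X e) then false else true).
    destruct (Hcover X (reach_refl _)) as [e0 [He0 Hb0]].
    assert (Hother : other e0 = false).
    { unfold other. now destruct (excluded_middle_informative (bisim X e0)). }
    assert (Hshorter : length (filter other l) < length l).
    { destruct (le_lt_eq_dec _ _ (filter_length_le other l)) as [Hlt | Heq]; [exact Hlt|].
      apply filter_length_forallb in Heq. rewrite forallb_forall in Heq.
      rewrite (Heq e0 He0) in Hother. discriminate. }
    assert (Hd : d <= length (filter other l)).
    { refine (IHn (filter other l) X1 _ (Acc_inv Hacc Hm) _ d Y Hp); [lia|].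
      intros H Hr. destruct (Hcover H (reach_cons Hm Hr)) as [e [He Hbe]].
      exists e. split; [| exact Hbe]. apply filter_In. split; [exact He|]. unfold other.
      destruct (excluded_middle_informative (bisim X e)) as [Hx|]; [|reflexivity]. exfalso.
      destruct (reach_path Hr) as [d0 Hp0].
      apply (no_bisimilar_return Hacc (path_cons Hm Hp0)).
      exact (bisim_trans Hbe (bisim_sym Hx)). }
    lia.
Qed.

Fixpoint depth_at_most (n : nat) (X : game) : Prop :=
  match n with 0 => idx X -> False | S n => forall a : idx X, depth_at_most n (opt X a) end.

Lemma depth_at_most_of_bounded n : forall X, bounded_depth n X -> depth_at_most n X.
Proof.
  induction n; intros X H a; simpl.
  - pose proof (H 1 (opt X a) (path_cons (ex_intro _ a eq_refl) (path_nil _))). lia.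
  - apply IHn. intros d Y Hp.
    pose proof (H (S d) Y (path_cons (ex_intro _ a eq_refl) Hp)). lia.
Qed.

Definition game_of_list (s : list game) : game :=
  Game (fun p : {k : nat | k < length s} => nth (proj1_sig p) s zero).

Fixpoint sublists {A : Type} (l : list A) : list (list A) :=
  match l with [] => [[]] | a :: l => sublists l ++ map (cons a) (sublists l) end.

Lemma filter_in_sublists {A : Type} (p : A -> bool) l : In (filter p l) (sublists l).
Proof.
  induction l as [|a l IH]; simpl; [now left|].
  destruct (p a); apply in_or_app; [right; now apply in_map | now left].
Qed.

Fixpoint games_of_depth (n : nat) : list game :=
  match n with 0 => [zero] | S n => map game_of_list (sublists (games_of_depth n)) end.

Lemma games_of_depth_cover n : forall X, depth_at_most n X ->
  exists Y, In Y (games_of_depth n) /\ bisim X Y.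
Proof.
  induction n; simpl; intros X HX.
  - exists zero. split; [now left | now apply bisim_zero_iff].
  - set (is_opt := fun e => if excluded_middle_informative (exists a, bisim (opt X a) e)
                            then true else false).
    exists (game_of_list (filter is_opt (games_of_depth n))).
    split; [apply in_map, filter_in_sublists|]. constructor.
    + intro a. destruct (IHn (opt X a) (HX a)) as [e [He Hb]].
      assert (Hin : In e (filter is_opt (games_of_depth n))).
      { apply filter_In. split; [exact He|]. unfold is_opt.
        destruct (excluded_middle_informative (exists a, bisim (opt X a) e)) as [|C];
          [reflexivity | exfalso; apply C; eauto]. }
      destruct (In_nth _ _ zero Hin) as [k [Hk Ek]].
      exists (exist (fun k => k < length (filter is_opt (games_of_depth n))) k Hk).
      simpl. now rewrite Ek.
    + intros [k Hk]. simpl. pose proof (nth_In _ zero Hk) as Hin.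
      apply filter_In in Hin as [_ Hopt]. unfold is_opt in Hopt.
      destruct (excluded_middle_informative _) as [[a Ha]|]; [now exists a | discriminate].
Qed.

Lemma short_iff_bounded_depth X : short X <-> terminating X /\ exists N, bounded_depth N X.
Proof.
  split.
  - intros [Ht [l Hl]]. split; [exact Ht|]. exists (length l).
    exact (depth_bounded_by_positions l (le_n _) (terminating_acc Ht) Hl).
  - intros [Ht [N HN]]. split; [exact Ht|]. exists (games_of_depth N). intros H Hr.
    destruct (reach_path Hr) as [d0 Hp0]. apply games_of_depth_cover, depth_at_most_of_bounded.
    intros d Y Hp. pose proof (HN _ _ (path_app Hp0 Hp)). lia.
Qed.

Lemma injective_sequence_of_infinite {A : Type} (P : A -> Prop) : ~ finite_on P ->
  exists s : nat -> A, (forall n, P (s n)) /\ forall m n, m < n -> s m <> s n.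
Proof.
  intro Hinf.
  destruct (choice (fun (l : list A) i => P i /\ ~ In i l)) as [pick Hpick].
  { intro l. apply NNPP. intro C. apply Hinf. exists l. intros i Hi.
    apply NNPP. intro Hn. apply C. now exists i. }
  pose (prefix := fix prefix n := match n with 0 => [] | S n => pick (prefix n) :: prefix n end).
  exists (fun n => pick (prefix n)). split; [intro; apply Hpick|].
  intros m n Hmn E. apply (proj2 (Hpick (prefix n))). rewrite <- E. clear E.
  induction Hmn; simpl; auto.
Qed.

Section OrderedJoin.
Variables (T : Type) (le : T -> T -> Prop).

Lemma join_update_cases (Fm : T -> game) (i0 : T) (x : game) (j : T) :
  (j = i0 /\ join_update le Fm i0 x j = x) \/
  (j <> i0 /\ le i0 j /\ join_update le Fm i0 x j = zero) \/
  (j <> i0 /\ ~ le i0 j /\ join_update le Fm i0 x j = Fm j).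
Proof.
  unfold join_update.
  destruct (excluded_middle_informative (j = i0)) as [e|e]; [now left|].
  destruct (excluded_middle_informative (le i0 j)); right; [left | right]; now repeat split.
Qed.

Lemma join_update_at (Fm : T -> game) (i : T) (x : game) : join_update le Fm i x i = x.
Proof. destruct (join_update_cases Fm i x i) as [[_ E] | [[C _] | [C _]]]; tauto. Qed.

Lemma move_join (Fm : T -> game) (i : T) (x : game) :
  move (Fm i) x -> move (ojoin le Fm) (ojoin le (join_update le Fm i x)).
Proof. intros [a ->]. now exists (existT (fun i => idx (Fm i)) i a). Qed.

Lemma join_move (Fm : T -> game) (Y : game) : move (ojoin le Fm) Y ->
  exists i x, move (Fm i) x /\ Y = ojoin le (join_update le Fm i x).
Proof. intros [[i a] ->]. exists i, (opt (Fm i) a). split; [now exists a | reflexivity]. Qed.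

Fixpoint position (F : T -> game) (c : nat -> T) (g : nat -> game) (n : nat) : T -> game :=
  match n with 0 => F | S n => join_update le (position F c g n) (c n) (g n) end.

Definition legal (F : T -> game) (c : nat -> T) (g : nat -> game) : Prop :=
  forall n, move (position F c g n (c n)) (g n).

Lemma legal_prefix_path (F : T -> game) c g n :
  (forall k, k < n -> move (position F c g k (c k)) (g k)) ->
  path n (ojoin le F) (ojoin le (position F c g n)).
Proof.
  induction n as [|n IH]; intro Hl; [constructor|].
  apply path_snoc with (ojoin le (position F c g n)).
  - apply IH. intros k Hk. apply Hl. lia.
  - apply move_join, Hl. lia.
Qed.

Lemma nonterminating_join_iff (F : T -> game) :
  ~ terminating (ojoin le F) <-> exists c g, legal F c g.
Proof.
  split.
  - intro Hnt. apply NNPP in Hnt as [f [f0 fm]].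
    destruct (dependent_choice (fun Fm => exists n, f n = ojoin le Fm)
      (fun Fm Fm' => exists i x, move (Fm i) x /\ Fm' = join_update le Fm i x) F)
      as [h [h0 hh]]; [now exists 0 | |].
    { intros Fm [n Hn]. pose proof (fm n) as Hm. rewrite Hn in Hm.
      destruct (join_move Fm Hm) as [i [x [Hx E]]].
      exists (join_update le Fm i x). split; [now exists (S n) | now exists i, x]. }
    destruct (choice (fun n (p : T * game) =>
      move (h n (fst p)) (snd p) /\ h (S n) = join_update le (h n) (fst p) (snd p)))
      as [p Hp].
    { intro n. destruct (proj2 (hh n)) as [i [x Hix]]. now exists (i, x). }
    exists (fun n => fst (p n)), (fun n => snd (p n)).
    assert (Hpos : forall n, position F (fun n => fst (p n)) (fun n => snd (p n)) n = h n).
    { induction n as [|n IH]; simpl; [now rewrite h0 | rewrite IH; symmetry; apply Hp]. }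
    intro n. rewrite Hpos. apply Hp.
  - intros [c [g Hl]] Hter. apply Hter.
    exists (fun n => ojoin le (position F c g n)). split; [reflexivity|].
    intro n. apply move_join, Hl.
Qed.

(* Every play of a component is a play of the join. *)
Lemma component_terminating (F : T -> game) (i : T) :
  terminating (ojoin le F) -> terminating (F i).
Proof.
  intros Ht [h [h0 hh]]. revert Ht. apply nonterminating_join_iff.
  exists (fun _ => i), (fun n => h (S n)).
  assert (Hpos : forall n, position F (fun _ => i) (fun n => h (S n)) n i = h n).
  { intros [|n]; simpl; [now rewrite h0 | apply join_update_at]. }
  intro n. rewrite Hpos. apply hh.
Qed.

Lemma component_path (i : T) d X Y : path d X Y ->
  forall Fm : T -> game, Fm i = X -> exists Z, path d (ojoin le Fm) Z.
Proof.
  induction 1 as [X|d X X' Y Hm Hp IH]; intros Fm E.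
  - exists (ojoin le Fm). constructor.
  - destruct (IH (join_update le Fm i X') (join_update_at Fm i X')) as [Z HZ].
    exists Z. apply path_cons with (ojoin le (join_update le Fm i X')); [|exact HZ].
    apply move_join. now rewrite E.
Qed.

Lemma component_short (F : T -> game) (i : T) : short (ojoin le F) -> short (F i).
Proof.
  rewrite !short_iff_bounded_depth. intros [Ht [N HN]].
  split; [exact (component_terminating F i Ht) | exists N].
  intros d Y Hp. destruct (component_path i Hp F eq_refl) as [Z HZ]. exact (HN _ _ HZ).
Qed.

Lemma position_untouched (F : T -> game) c g n j :
  (forall k, k < n -> c k <> j /\ ~ le (c k) j) -> position F c g n j = F j.
Proof.
  induction n as [|n IH]; intro Hfar; [reflexivity|]. simpl.
  destruct (join_update_cases (position F c g n) (c n) (g n) j)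
    as [[E _] | [[_ [L _]] | [_ [_ E]]]].
  - exfalso. apply (proj1 (Hfar n (le_n _))). now symmetry.
  - exfalso. exact (proj2 (Hfar n (le_n _)) L).
  - rewrite E. apply IH. intros k Hk. apply Hfar. lia.
Qed.

Definition descends (F Fm : T -> game) : Prop := forall j, Fm j = zero \/ reach (F j) (Fm j).

Lemma descends_update (F Fm : T -> game) i x :
  descends F Fm -> move (Fm i) x -> descends F (join_update le Fm i x).
Proof.
  intros HFm Hx j.
  destruct (join_update_cases Fm i x j) as [[-> E] | [[_ [_ E]] | [_ [_ E]]]]; rewrite E.
  - destruct (HFm i) as [Z | R]; [rewrite Z in Hx; destruct (no_move_zero Hx)|].
    right. eapply reach_step; eauto.
  - now left.
  - apply HFm.
Qed.

Section LegalPlay.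
Variables (F : T -> game) (c : nat -> T) (g : nat -> game).
Hypothesis play_legal : legal F c g.

Lemma position_descends n : descends F (position F c g n).
Proof.
  induction n as [|n IH]; [intro j; right; constructor|].
  apply descends_update; [exact IH | apply play_legal].
Qed.

Lemma legal_moves_in_support n : support F (c n).
Proof.
  intro Hz. destruct (play_legal n) as [a _]. revert a.
  destruct (position_descends n (c n)) as [Z | R]; [rewrite Z; intros [] |].
  rewrite bisim_zero_iff in Hz. rewrite (reach_no_options Hz R). exact Hz.
Qed.

Lemma legal_zero_persists n m j :
  n <= m -> position F c g n j = zero -> position F c g m j = zero.
Proof.
  intros Hnm Hz. induction Hnm as [|m _ IH]; [exact Hz|]. simpl.
  destruct (join_update_cases (position F c g m) (c m) (g m) j)
    as [[-> _] | [[_ [_ E]] | [_ [_ E]]]].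
  - exfalso. pose proof (play_legal m) as Hm. rewrite IH in Hm. exact (no_move_zero Hm).
  - exact E.
  - now rewrite E.
Qed.

(* A later move is never in a component strictly above an earlier one:
   that component was erased by the earlier move. *)
Lemma legal_later_not_above n m : n < m -> le (c n) (c m) -> c n = c m.
Proof.
  intros Hnm Hle. apply NNPP. intro Hne.
  assert (Hz : position F c g (S n) (c m) = zero).
  { simpl. destruct (join_update_cases (position F c g n) (c n) (g n) (c m))
      as [[E _] | [[_ [_ E]] | [_ [C _]]]]; [congruence | exact E | contradiction]. }
  pose proof (play_legal m) as Hm. rewrite (legal_zero_persists _ Hnm Hz) in Hm.
  exact (no_move_zero Hm).
Qed.

End LegalPlay.

(* (1, <=) In an infinite play, the moved components contain an ascending, hence
   constant, subsequence x; component x is never erased, so it moves infinitely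
   often and otherwise stays put, which is impossible when G_x terminates. *)
Lemma join_terminating (F : T -> game) :
  wpo_on le (support F) -> (forall i, terminating (F i)) -> terminating (ojoin le F).
Proof.
  intros Hw Ht. apply NNPP. intro Hnt.
  destruct (proj1 (nonterminating_join_iff F) Hnt) as [c [g Hl]].
  destruct (Hw c (legal_moves_in_support Hl)) as [h [Hh_mono Hh_le]].
  set (x := c (h 0)).
  assert (Hx : forall k, c (h k) = x).
  { intros [|k]; [reflexivity|]. symmetry.
    apply (legal_later_not_above Hl); [apply Hh_mono | apply Hh_le]; lia. }
  assert (Hh_ge : forall k, k <= h k).
  { induction k as [|k IH]; [lia|]. pose proof (Hh_mono k (S k)). lia. }
  assert (Hnz : forall m, position F c g m x <> zero).
  { intros m Hz. apply (no_move_zero (Y := g (h m))).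
    rewrite <- (legal_zero_persists Hl _ (Hh_ge m) Hz), <- (Hx m). apply Hl. }
  apply (no_stuttering_descent (terminating_acc (Ht x)) (fun m => position F c g m x))
    with 0; [| | reflexivity].
  - intro m. simpl. destruct (join_update_cases (position F c g m) (c m) (g m) x)
      as [[Ex E] | [[_ [_ E]] | [_ [_ E]]]].
    + right. rewrite E, Ex. apply Hl.
    + exfalso. exact (Hnz (S m) E).
    + now left.
  - intro N. exists (h N). split; [apply Hh_ge|]. simpl.
    rewrite <- (Hx N), join_update_at. apply Hl.
Qed.

Lemma join_reach_descends (F : T -> game) H : reach (ojoin le F) H ->
  exists Fm, H = ojoin le Fm /\ descends F Fm.
Proof.
  induction 1 as [|H H' _ [Fm [-> HFm]] Hm].
  - exists F. split; [reflexivity | intro j; right; constructor].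
  - destruct (join_move Fm Hm) as [i [x [Hx ->]]].
    exists (join_update le Fm i x). split; [reflexivity | now apply descends_update].
Qed.

Lemma join_bisim : forall F1 F2 : T -> game,
  (forall j, bisim (F1 j) (F2 j)) -> bisim (ojoin le F1) (ojoin le F2).
Proof.
  assert (Hupdate : forall (F1 F2 : T -> game) i x1 x2,
    (forall j, bisim (F1 j) (F2 j)) -> bisim x1 x2 ->
    forall j, bisim (join_update le F1 i x1 j) (join_update le F2 i x2 j)).
  { intros F1 F2 i x1 x2 HF Hx j. unfold join_update.
    destruct (excluded_middle_informative (j = i)); [exact Hx|].
    destruct (excluded_middle_informative (le i j)); [apply bisim_refl | apply HF]. }
  cofix CH. intros F1 F2 HF. constructor.
  - intros [i a]. destruct (proj1 (bisim_options (HF i)) a) as [b Hb].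
    exists (existT (fun i => idx (F2 i)) i b). simpl. apply CH. now apply Hupdate.
  - intros [i b]. destruct (proj2 (bisim_options (HF i)) b) as [a Ha].
    exists (existT (fun i => idx (F1 i)) i a). simpl. apply CH. now apply Hupdate.
Qed.

Definition update (Fm : T -> game) (j : T) (x : game) : T -> game :=
  fun k => if excluded_middle_informative (k = j) then x else Fm k.

Fixpoint families (L : T -> list game) (ls : list T) : list (T -> game) :=
  match ls with
  | [] => [fun _ => zero]
  | j :: ls => flat_map (fun Fm => map (update Fm j) (zero :: L j)) (families L ls)
  end.

Lemma families_cover (L : T -> list game) ls : forall Fm : T -> game,
  (forall j, In j ls -> exists x, In x (zero :: L j) /\ bisim (Fm j) x) ->
  exists Fm', In Fm' (families L ls) /\
    forall j, (In j ls -> bisim (Fm j) (Fm' j)) /\ (~ In j ls -> Fm' j = zero).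
Proof.
  induction ls as [|j0 ls IH]; intros Fm HFm.
  - exists (fun _ => zero). split; [now left | intro j; split; [intros [] | reflexivity]].
  - destruct (IH Fm (fun j Hj => HFm j (or_intror Hj))) as [Fm' [Hin HF']].
    destruct (HFm j0 (or_introl eq_refl)) as [x [Hx Hbx]].
    exists (update Fm' j0 x). split.
    + apply in_flat_map. exists Fm'. split; [exact Hin | now apply in_map].
    + intro j. unfold update. destruct (excluded_middle_informative (j = j0)) as [-> | Hne].
      * split; [now intros _ | intro C; exfalso; apply C; now left].
      * split.
        -- intros [E | Hj]; [congruence | now apply HF'].
        -- intro Hn. apply HF'. intro Hj. apply Hn. now right.
Qed.

Section PartialOrder.
Hypothesis le_refl : forall x, le x x.
Hypothesis le_antisym : forall x y, le x y -> le y x -> x = y.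
Hypothesis le_trans : forall x y z, le x y -> le y z -> le x z.

(* (1, =>) A bad sequence in the support is played move after move: no move
   erases a later component, which is neither equal to nor above it. *)
Lemma join_terminating_wpo (F : T -> game) :
  terminating (ojoin le F) -> wpo_on le (support F).
Proof.
  intro Ht. apply (wpo_of_no_bad_sequence le_trans). intros s Hs Hbad.
  revert Ht. apply nonterminating_join_iff. exists s, (fun n => some_option (F (s n))).
  intro n. rewrite position_untouched; [apply some_option_move, Hs |].
  intros k Hk. split; [intro E | exact (Hbad k n Hk)].
  apply (Hbad k n Hk). rewrite E. apply le_refl.
Qed.

(* (2, =>) An infinite support contains, by (1), an ascending sequence of
   distinct components j_0 < j_1 < ...; playing j_N, ..., j_0 in this order is
   legal, giving plays of every length. *)
Lemma join_short_finite_support (F : T -> game) :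
  short (ojoin le F) -> finite_on (support F).
Proof.
  rewrite short_iff_bounded_depth. intros [Ht [N HN]]. apply NNPP. intro Hinf.
  destruct (injective_sequence_of_infinite Hinf) as [s [Hs_supp Hs_inj]].
  destruct (join_terminating_wpo Ht s Hs_supp) as [h [Hh_mono Hh_le]].
  set (c := fun k => s (h (N - k))).
  assert (Hnot_below : forall k n, k < n -> n <= N -> c k <> c n /\ ~ le (c k) (c n)).
  { intros k n Hkn HnN. assert (Hlt : N - n < N - k) by lia.
    assert (Hne : c n <> c k) by exact (Hs_inj _ _ (Hh_mono _ _ Hlt)).
    split; [intro E; now apply Hne | intro Hle].
    apply Hne, le_antisym; [exact (Hh_le _ _ Hlt) | exact Hle]. }
  enough (S N <= N) by lia.
  eapply HN. apply (legal_prefix_path F c (fun k => some_option (F (c k))) (n := S N)).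
  intros n Hn. rewrite position_untouched; [apply some_option_move, Hs_supp|].
  intros k Hk. apply Hnot_below; lia.
Qed.

(* (2, <=) The join terminates by (1), and its positions are joins of families
   drawn from the finitely many position classes of the finitely many
   components of the support. *)
Lemma join_short (F : T -> game) :
  finite_on (support F) -> (forall i, short (F i)) -> short (ojoin le F).
Proof.
  intros Hfin Hs. split.
  { apply join_terminating; [apply finite_wpo; assumption | intro i; apply Hs]. }
  destruct Hfin as [ls Hls].
  destruct (choice (fun j (l : list game) => forall H, reach (F j) H ->
    exists H', In H' l /\ bisim H H')) as [L HL]; [intro j; apply Hs|].
  exists (map (ojoin le) (families L ls)). intros H Hr.
  destruct (join_reach_descends F Hr) as [Fm [-> HFm]].
  destruct (families_cover L ls Fm) as [Fm' [Hin HF']].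
  { intros j Hj. destruct (HFm j) as [Z | R].
    - exists zero. split; [now left | rewrite Z; apply bisim_refl].
    - destruct (HL j _ R) as [H' [? ?]]. exists H'. split; [now right | assumption]. }
  exists (ojoin le Fm'). split; [now apply in_map|]. apply join_bisim. intro j.
  destruct (classic (In j ls)) as [Hj | Hj]; [now apply HF'|].
  rewrite (proj2 (HF' j) Hj).
  assert (Hnull : bisim (F j) zero) by (apply NNPP; intro C; apply Hj, Hls, C).
  destruct (HFm j) as [Z | R]; [rewrite Z; apply bisim_refl|].
  rewrite (reach_no_options (proj1 (bisim_zero_iff _) Hnull) R). exact Hnull.
Qed.

End PartialOrder.
End OrderedJoin.

Theorem mainTheorem1 (S : Type) (le : S -> S -> Prop) (F : S -> game) :
  is_poset le ->
  (terminating (ojoin le F) <->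
     (wpo_on le (support F) /\ forall i : S, terminating (F i))) /\
  (short (ojoin le F) <->
     (finite_on (support F) /\ forall i : S, short (F i))).
Proof.
  intros [Hrefl [Hantisym Htrans]]. split; split.
  - intro Ht. split.
    + exact (join_terminating_wpo le Hrefl Htrans Ht).
    + intro i. exact (component_terminating le F i Ht).
  - intros [Hw Ht]. exact (join_terminating Hw Ht).
  - intro Hs. split.
    + exact (join_short_finite_support le Hrefl Hantisym Htrans F Hs).
    + intro i. exact (component_short le F i Hs).
  - intros [Hfin Hs]. exact (join_short le Hrefl Htrans Hfin Hs).
Qed.
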